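(* Let $r\ge1$ be an integer and $n=2r$ or $n=2r-1$. Let $\xi_j=e^{2\pi i(j-1)/n}$, $\zeta_j=e^{2\pi i(j-r)/n}$ for $j=1,\dots,n$. For $0<\vartheta<\frac\pi{2n}$ let $\mathbb S_n(\vartheta)=\{z:-\frac\pi2-\frac\pi n+\vartheta<\arg z<-\frac\pi2+\frac{3\pi}n-\vartheta\}$ if $n=2r$ and $\mathbb S_n(\vartheta)=\{z:-\frac\pi2-\frac\pi n+\vartheta<\arg z<-\frac\pi2+\frac{2\pi}n-\vartheta\}$ if $n=2r-1$. Then: (1.1) for $k=1,\dots,r$, $\operatorname{Im}(\xi_kz+\zeta_{r-k+1}\overline z)=0$ for all $z\in\mathbb C$; (1.2) for $k,j\in\{1,\dots,r\}$ with $k+j\ge r+2$ and all $z\in\mathbb S_n(\vartheta)$, $\operatorname{Im}(\xi_kz+\zeta_j\overline z)\ge2\sin\big(\frac{k+j-r-1}n\pi\big)\sin\vartheta\cdot|z|$; (2.1) for $k=1,\dots,n-r$, $\operatorname{Im}(\xi_{k+r}z+\zeta_{n-k+1}\overline z)=0$ for all $z\in\mathbb C$; (2.2) for $k,j\in\{1,\dots,n-r\}$ with $k+j\le n-r$ and all $z\in\mathbb S_n(\vartheta)$, $\operatorname{Im}(\xi_{k+r}z+\zeta_{j+r}\overline z)\ge2\sin\big(\frac{n-r-k-j+1}n\pi\big)\sin\vartheta\cdot|z|$ if $n=2r$, and $\ge2\sin\big(\frac{n-r-k-j+1}n\pi\big)\sin(\frac\pi n+\vartheta)\cdot|z|$ if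 $n=2r-1$. *)

From Stdlib Require Import Reals.
From Coquelicot Require Export Coquelicot.
Open Scope R_scope.

Definition cis (t : R) : C := (cos t, sin t).

Definition xi (n j : nat) : C := cis (2 * PI * (INR j - 1) / INR n).
Definition zeta (n r j : nat) : C := cis (2 * PI * (INR j - INR r) / INR n).

Definition is_arg (z : C) (t : R) : Prop :=
  z <> 0%C /\ - PI < t <= PI /\ z = Cmult (RtoC (Cmod z)) (cis t).

Definition sector (n r : nat) (th : R) (z : C) : Prop :=
  exists t, is_arg z t /\
    - PI / 2 - PI / INR n + th < t /\
    t < (if Nat.eqb n (2 * r) then - PI / 2 + 3 * PI / INR n - th
         else - PI / 2 + 2 * PI / INR n - th).

From Stdlib Require Import Reals Lra Lia.
From Coquelicot Require Import Coquelicot.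
Open Scope R_scope.

(* Writing a = S + D, b = S - D and z = m e^{it}, the quantity
   Im (e^{ia} z + e^{ib} conj z) equals 2 sin S cos (D + t) m.  For the pairs
   in (1.1)/(2.1) the angles a, b are opposite modulo 2 pi, so sin S = 0.  For the
   pairs in (1.2)/(2.2), with p = pi/n, S is a multiple of p in [0, pi] and the
   shift D = d p moves the sector S_n(theta) into the arc
   |phi| <= pi/2 - (e p + theta), on which cos phi >= sin (e p + theta); the
   slack e is 0 except for (2.2) with n = 2r - 1, where it is 1. *)

Lemma Im_cis_mul_add_cis_mul_conj (a b : R) (z : C) :
  Im (Cplus (Cmult (cis a) z) (Cmult (cis b) (Cconj z))) =
  (sin a + sin b) * Re z + (cos a - cos b) * Im z.
Proof. destruct z as [x y]; unfold cis, Cplus, Cmult, Cconj, Im, Re; simpl; ring. Qed.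

Lemma Im_cis_opp_conj (a : R) (z : C) :
  Im (Cplus (Cmult (cis a) z) (Cmult (cis (- a)) (Cconj z))) = 0.
Proof. rewrite Im_cis_mul_add_cis_mul_conj, sin_neg, cos_neg; ring. Qed.

Lemma cis_add_2PI (x : R) : cis (x + 2 * PI) = cis x.
Proof. unfold cis; rewrite sin_plus, cos_plus, sin_2PI, cos_2PI; f_equal; ring. Qed.

Lemma Im_polar (S D m t : R) :
  Im (Cplus (Cmult (cis (S + D)) (Cmult (RtoC m) (cis t)))
            (Cmult (cis (S - D)) (Cconj (Cmult (RtoC m) (cis t)))))
  = 2 * sin S * cos (D + t) * m.
Proof.
  rewrite Im_cis_mul_add_cis_mul_conj.
  unfold cis, Cmult, RtoC, Im, Re; simpl.
  rewrite sin_plus, sin_minus, cos_plus, cos_minus, cos_plus; ring.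
Qed.

Lemma sin_le_cos (c phi : R) :
  0 <= c -> - (PI / 2 - c) <= phi <= PI / 2 - c -> sin c <= cos phi.
Proof.
  intros Hc Hphi; pose proof PI_RGT_0.
  rewrite <- cos_shift.
  assert (Hdecr : forall x, 0 <= x <= PI / 2 - c -> cos (PI / 2 - c) <= cos x).
  { intros x Hx; destruct (Req_dec x (PI / 2 - c)) as [->|Hne]; [lra|].
    left; apply cos_decreasing_1; lra. }
  destruct (Rle_dec 0 phi); [apply Hdecr; lra|].
  rewrite <- (cos_neg phi); apply Hdecr; lra.
Qed.

Lemma sin_mul_ge0 (s p N : R) :
  0 < p -> N * p = PI -> 0 <= s <= N -> 0 <= sin (s * p).
Proof. intros Hp HN Hs; apply sin_ge_0; nra. Qed.

(* With p = pi/n, the bounds on [t] are those of the sector S_n(theta). *)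
Lemma Im_sector_ge (N p c s d e th m t : R) :
  0 < p -> N * p = PI -> 0 <= s <= N ->
  0 <= e -> 1 + e <= d -> d + c + e <= N -> 0 <= th -> 0 <= m ->
  - PI / 2 - p + th < t < - PI / 2 + c * p - th ->
  Im (Cplus (Cmult (cis ((s + d) * p)) (Cmult (RtoC m) (cis t)))
            (Cmult (cis ((s - d) * p)) (Cconj (Cmult (RtoC m) (cis t)))))
  >= 2 * sin (s * p) * sin (e * p + th) * m.
Proof.
  intros Hp HN Hs He Hd Hdc Hth Hm Ht.
  replace ((s + d) * p) with (s * p + d * p) by ring.
  replace ((s - d) * p) with (s * p - d * p) by ring.
  rewrite Im_polar.
  assert (Hcos : sin (e * p + th) <= cos (d * p + t)).
  { apply sin_le_cos; nra. }
  pose proof (sin_mul_ge0 s p N Hp HN Hs).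
  assert (0 <= sin (s * p) * m) by (apply Rmult_le_pos; lra).
  nra.
Qed.

Lemma sector_polar (n r : nat) (th : R) (z : C) :
  sector n r th z ->
  exists t, z = Cmult (RtoC (Cmod z)) (cis t) /\
    - PI / 2 - PI / INR n + th < t <
    - PI / 2 + (if Nat.eqb n (2 * r) then 3 else 2) * (PI / INR n) - th.
Proof.
  intros [t [[_ [_ Hz]] [Hlo Hhi]]]; exists t; split; [exact Hz|split; [exact Hlo|]].
  destruct (Nat.eqb n (2 * r)); unfold Rdiv in *; lra.
Qed.

Lemma sector_width_eq (n r : nat) :
  (1 <= r)%nat -> (n = 2 * r \/ n = 2 * r - 1)%nat ->
  (if Nat.eqb n (2 * r) then 3 else 2) + 2 * INR r = INR n + 3.
Proof.
  intros Hr [-> | ->].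
  - rewrite Nat.eqb_refl, mult_INR; simpl; ring.
  - replace (Nat.eqb (2 * r - 1) (2 * r)) with false by (symmetry; apply Nat.eqb_neq; lia).
    rewrite minus_INR, mult_INR by lia; simpl; ring.
Qed.

Ltac INR_le H := apply le_INR in H; rewrite ?plus_INR in H; simpl INR in H.

Lemma Im_xi_zeta_antidiagonal_eq0 (n r k : nat) (z : C) :
  (k <= r)%nat ->
  Im (Cplus (Cmult (xi n k) z) (Cmult (zeta n r (r - k + 1)) (Cconj z))) = 0.
Proof.
  intros Hk; unfold xi, zeta.
  rewrite plus_INR, minus_INR by exact Hk; simpl INR.
  replace (2 * PI * (INR r - INR k + 1 - INR r) / INR n)
    with (- (2 * PI * (INR k - 1) / INR n)) by (unfold Rdiv; ring).
  apply Im_cis_opp_conj.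
Qed.

Lemma Im_xi_zeta_shifted_antidiagonal_eq0 (n r k : nat) (z : C) :
  (0 < n)%nat -> (k <= n)%nat ->
  Im (Cplus (Cmult (xi n (k + r)) z) (Cmult (zeta n r (n - k + 1)) (Cconj z))) = 0.
Proof.
  intros Hn Hk; apply lt_0_INR in Hn; unfold xi, zeta.
  rewrite !plus_INR, minus_INR by exact Hk; simpl INR.
  replace (2 * PI * (INR n - INR k + 1 - INR r) / INR n)
    with (- (2 * PI * (INR k + INR r - 1) / INR n) + 2 * PI) by (field; lra).
  rewrite cis_add_2PI; apply Im_cis_opp_conj.
Qed.

Lemma Im_xi_zeta_sector_ge (n r k j : nat) (th : R) (z : C) :
  (n = 2 * r \/ n = 2 * r - 1)%nat -> 0 <= th ->
  (1 <= k <= r)%nat -> (1 <= j <= r)%nat -> (r + 2 <= k + j)%nat ->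
  sector n r th z ->
  Im (Cplus (Cmult (xi n k) z) (Cmult (zeta n r j) (Cconj z)))
    >= 2 * sin ((INR k + INR j - INR r - 1) / INR n * PI) * sin th * Cmod z.
Proof.
  intros Hn Hth Hk Hj Hkj Hz.
  destruct (sector_polar _ _ _ _ Hz) as [t [Hzt Ht]].
  set (m := Cmod z) in Hzt |- *; rewrite Hzt.
  pose proof (sector_width_eq n r ltac:(lia) Hn) as Hwidth.
  assert (HN : 0 < INR n) by (apply lt_0_INR; lia).
  pose proof PI_RGT_0.
  assert (Hm : 0 <= m) by apply Cmod_ge_0.
  set (p := PI / INR n) in Ht |- *.
  assert (Hp : 0 < p) by (apply Rdiv_lt_0_compat; lra).
  assert (HNp : INR n * p = PI) by (unfold p; field; lra).
  set (s := INR k + INR j - INR r - 1).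
  set (d := INR k - INR j + INR r - 1).
  unfold xi, zeta.
  replace (2 * PI * (INR k - 1) / INR n) with ((s + d) * p) by (unfold s, d, p; field; lra).
  replace (2 * PI * (INR j - INR r) / INR n) with ((s - d) * p) by (unfold s, d, p; field; lra).
  replace (s / INR n * PI) with (s * p) by (unfold p; field; lra).
  replace (sin th) with (sin (0 * p + th)) by (f_equal; ring).
  destruct Hk as [_ Hkr]; destruct Hj as [_ Hjr].
  INR_le Hkr; INR_le Hjr; INR_le Hkj.
  assert (Hc : 2 <= (if Nat.eqb n (2 * r) then 3 else 2) <= 3)
    by (destruct (Nat.eqb n (2 * r)); lra).
  apply Im_sector_ge with (N := INR n) (c := if Nat.eqb n (2 * r) then 3 else 2);
    unfold s, d; lra.
Qed.

Lemma Im_xi_zeta_shifted_sector_ge (n r k j : nat) (th : R) (z : C) :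
  (n = 2 * r \/ n = 2 * r - 1)%nat -> 0 <= th ->
  (1 <= k)%nat -> (1 <= j)%nat -> (k + j <= n - r)%nat ->
  sector n r th z ->
  Im (Cplus (Cmult (xi n (k + r)) z) (Cmult (zeta n r (j + r)) (Cconj z)))
    >= 2 * sin ((INR n - INR r - INR k - INR j + 1) / INR n * PI)
         * (if Nat.eqb n (2 * r) then sin th else sin (PI / INR n + th)) * Cmod z.
Proof.
  intros Hn Hth Hk Hj Hkj Hz.
  destruct (sector_polar _ _ _ _ Hz) as [t [Hzt Ht]].
  set (m := Cmod z) in Hzt |- *; rewrite Hzt.
  pose proof (sector_width_eq n r ltac:(lia) Hn) as Hwidth.
  assert (Hkjr : (k + j + r <= n)%nat) by lia.
  assert (HN : 0 < INR n) by (apply lt_0_INR; lia).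
  pose proof PI_RGT_0.
  assert (Hm : 0 <= m) by apply Cmod_ge_0.
  set (p := PI / INR n) in Ht |- *.
  assert (Hp : 0 < p) by (apply Rdiv_lt_0_compat; lra).
  assert (HNp : INR n * p = PI) by (unfold p; field; lra).
  set (s := INR k + INR j + INR r - 1).
  set (d := INR k - INR j + INR r - 1).
  unfold xi, zeta; rewrite !plus_INR.
  replace (2 * PI * (INR k + INR r - 1) / INR n) with ((s + d) * p)
    by (unfold s, d, p; field; lra).
  replace (2 * PI * (INR j + INR r - INR r) / INR n) with ((s - d) * p)
    by (unfold s, d, p; field; lra).
  replace (sin ((INR n - INR r - INR k - INR j + 1) / INR n * PI)) with (sin (s * p))
    by (rewrite <- sin_PI_x; f_equal; unfold s, p; field; lra).
  INR_le Hk; INR_le Hj; INR_le Hkjr.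
  destruct (Nat.eqb n (2 * r)) eqn:Heven.
  - replace (sin th) with (sin (0 * p + th)) by (f_equal; ring).
    apply Im_sector_ge with (N := INR n) (c := 3); unfold s, d; lra.
  - replace (p + th) with (1 * p + th) by ring.
    apply Im_sector_ge with (N := INR n) (c := 2); unfold s, d; lra.
Qed.

Theorem lemma8p4 (r n : nat) (th : R) :
  (1 <= r)%nat ->
  (n = (2 * r)%nat \/ n = (2 * r - 1)%nat) ->
  0 < th < PI / (2 * INR n) ->
  (* (1.1) *)
  (forall k : nat, (1 <= k <= r)%nat -> forall z : C,
     Im (Cplus (Cmult (xi n k) z) (Cmult (zeta n r (r - k + 1)) (Cconj z))) = 0)
  /\
  (* (1.2) *)
  (forall k j : nat, (1 <= k <= r)%nat -> (1 <= j <= r)%nat -> (r + 2 <= k + j)%nat ->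
     forall z : C, sector n r th z ->
     Im (Cplus (Cmult (xi n k) z) (Cmult (zeta n r j) (Cconj z)))
       >= 2 * sin ((INR k + INR j - INR r - 1) / INR n * PI) * sin th * Cmod z)
  /\
  (* (2.1) *)
  (forall k : nat, (1 <= k <= n - r)%nat -> forall z : C,
     Im (Cplus (Cmult (xi n (k + r)) z) (Cmult (zeta n r (n - k + 1)) (Cconj z))) = 0)
  /\
  (* (2.2) *)
  (forall k j : nat, (1 <= k <= n - r)%nat -> (1 <= j <= n - r)%nat -> (k + j <= n - r)%nat ->
     forall z : C, sector n r th z ->
     Im (Cplus (Cmult (xi n (k + r)) z) (Cmult (zeta n r (j + r)) (Cconj z)))
       >= 2 * sin ((INR n - INR r - INR k - INR j + 1) / INR n * PI)
            * (if Nat.eqb n (2 * r) then sin th else sin (PI / INR n + th)) * Cmod z).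
Proof.
  intros _ Hn Hth.
  assert (Hth0 : 0 <= th) by lra.
  split; [|split; [|split]].
  - intros k [_ Hk] z; exact (Im_xi_zeta_antidiagonal_eq0 n r k z Hk).
  - intros k j Hk Hj Hkj z Hz; exact (Im_xi_zeta_sector_ge n r k j th z Hn Hth0 Hk Hj Hkj Hz).
  - intros k Hk z; apply Im_xi_zeta_shifted_antidiagonal_eq0; lia.
  - intros k j [Hk _] [Hj _] Hkj z Hz;
      exact (Im_xi_zeta_shifted_sector_ge n r k j th z Hn Hth0 Hk Hj Hkj Hz).
Qed.
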